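(* Let $S$ be an $L$-theory extending $I\Sigma_1$ such that for some $K_0\in\mathbb{N}$, $S$ proves that pairwise coprime $a,b,c$ with $a+b=c$ satisfy $c<K_0\,\mathrm{rad}(abc)^{1+1/3}$, and $S$ proves Catalan's conjecture for the definable exponential $x^y$. Let $\langle\mathcal{B},e\rangle\models S+\mathrm{Exp}'$, with $\mathcal{A}$ a substructure of $\mathcal{B}$ satisfying $\mathrm{Pr}$ and $e:B\times A\to B$. Let $x\in B$, $y\in A$ with $x,y>1$. (a) If $y$ is standard, then $\mathrm{rad}(e(x,y))^2\le e(x,y)$. (b) If $y$ is nonstandard, then $K\,\mathrm{rad}(e(x,y))^n<e(x,y)$ for all standard $K,n\in\mathbb{N}$.
   Context: $L=\langle0,1,+,\cdot,\le\rangle$; $\mathrm{rad}(a)$ is the product of the distinct primes dividing $a$. Catalan's conjecture for $x^y$: the only $x,y,a,b>1$ with $x^a-y^b=1$ are $x=3,a=2,y=2,b=3$. Presburger arithmetic $\mathrm{Pr}$: $0\ne z+1$; $x\ne0\to\exists z\,(x=z+1)$; $x+z=y+z\to x=y$; $x+0=x$; associativity and commutativity of $+$; $x\le y\leftrightarrow\exists z\,(x+z=y)$; for each standard $0<n$, $\exists y\,(ny\le x<n(y+1))$. $\mathrm{Exp}'$: (e0) there is an $L$-substructure $\mathcal{A}$ of $\mathcal{B}$ satisfying $\mathrm{Pr}$ with $e:B\times A\to B$; and for $x\in B$, $y,z\in A$: (e1) $(x=1\vee y=0)\leftrightarrow e(x,y)=1$; (e2) $x\ne0\to e(x,y)\neq0$;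 (e3) $e(x,1)=x$; (e4) $e(x,y+z)=e(x,y)e(x,z)$. *)

(* Deep embedding of first-order arithmetic in the language
   L = <0,1,+,*,<=> with NAMED variables (variables are natural numbers). *)
From Stdlib Require Import List Arith.
Import ListNotations.

Inductive term : Type :=
| V (n : nat) | Zero | One | Plus (s t : term) | Times (s t : term).

Inductive form : Type :=
| Feq (s t : term) | Fle (s t : term) | Fbot
| Fimp (p q : form) | Fand (p q : form) | For (p q : form)
| Fall (x : nat) (p : form) | Fex (x : nat) (p : form).

Definition Fnot (p : form) : form := Fimp p Fbot.
Definition Flt (s t : term) : form := Fand (Fle s t) (Fnot (Feq s t)).
Fixpoint Fands (l : list form) : form :=
  match l with [] => Fnot Fbot | [p] => p | p :: l' => Fand p (Fands l') end.

Fixpoint tvars (t : term) : list nat :=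
  match t with
  | V n => [n] | Zero | One => []
  | Plus s u | Times s u => tvars s ++ tvars u
  end.

Fixpoint fvars (p : form) : list nat :=
  match p with
  | Feq s t | Fle s t => tvars s ++ tvars t
  | Fbot => []
  | Fimp p q | Fand p q | For p q => fvars p ++ fvars q
  | Fall x p | Fex x p => filter (fun n => negb (Nat.eqb n x)) (fvars p)
  end.

Definition fresh (ts : list term) : nat :=
  S (fold_right Nat.max 0 (flat_map tvars ts)).

Fixpoint num (n : nat) : term :=
  match n with 0 => Zero | S m => Plus (num m) One end.
Fixpoint tpow (t : term) (n : nat) : term :=
  match n with 0 => One | S m => Times (tpow t m) t end.

Record LStr : Type := {
  dom : Type;
  z0 : dom; o1 : dom;
  addB : dom -> dom -> dom; mulB : dom -> dom -> dom;
  leB : dom -> dom -> Prop }.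

Definition upd {M : LStr} (rho : nat -> dom M) (x : nat) (d : dom M) :=
  fun n => if Nat.eqb n x then d else rho n.

Fixpoint eval (M : LStr) (rho : nat -> dom M) (t : term) : dom M :=
  match t with
  | V n => rho n | Zero => z0 M | One => o1 M
  | Plus s u => addB M (eval M rho s) (eval M rho u)
  | Times s u => mulB M (eval M rho s) (eval M rho u)
  end.

Fixpoint sat (M : LStr) (rho : nat -> dom M) (p : form) : Prop :=
  match p with
  | Feq s t => eval M rho s = eval M rho t
  | Fle s t => leB M (eval M rho s) (eval M rho t)
  | Fbot => False
  | Fimp p q => sat M rho p -> sat M rho q
  | Fand p q => sat M rho p /\ sat M rho q
  | For p q => sat M rho p \/ sat M rho q
  | Fall x p => forall d, sat M (upd rho x d) p
  | Fex x p => exists d, sat M (upd rho x d) p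
  end.

(* a theory is a set of formulas, read as their universal closures *)
Definition ModelOf (M : LStr) (S : form -> Prop) : Prop :=
  forall p, S p -> forall rho, sat M rho p.

(* "S proves p": semantic consequence (equivalent by completeness) *)
Definition Proves (S : form -> Prop) (p : form) : Prop :=
  forall M : LStr, ModelOf M S -> forall rho, sat M rho p.

Inductive Delta0 : form -> Prop :=
| D0_eq s t : Delta0 (Feq s t)
| D0_le s t : Delta0 (Fle s t)
| D0_bot : Delta0 Fbot
| D0_imp p q : Delta0 p -> Delta0 q -> Delta0 (Fimp p q)
| D0_and p q : Delta0 p -> Delta0 q -> Delta0 (Fand p q)
| D0_or p q : Delta0 p -> Delta0 q -> Delta0 (For p q)
| D0_ball x t p : ~ In x (tvars t) -> Delta0 p ->
    Delta0 (Fall x (Fimp (Fle (V x) t) p))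
| D0_bex x t p : ~ In x (tvars t) -> Delta0 p ->
    Delta0 (Fex x (Fand (Fle (V x) t) p)).

Inductive Sigma1 : form -> Prop :=
| S1_d0 p : Delta0 p -> Sigma1 p
| S1_ex x p : Sigma1 p -> Sigma1 (Fex x p).

(* induction axiom for p in the variable x, using a variable z not free in p:
   (p(0) /\ forall z (p(z) -> p(z+1))) -> forall x p(x),
   where p(t) is rendered as  forall x (x = t -> p). *)
Definition Ind (x z : nat) (p : form) : form :=
  Fimp (Fand (Fall x (Fimp (Feq (V x) Zero) p))
             (Fall z (Fimp (Fall x (Fimp (Feq (V x) (V z)) p))
                           (Fall x (Fimp (Feq (V x) (Plus (V z) One)) p)))))
       (Fall x p).

(* Robinson's Q (successor written x+1), with the definition of <= *)
Definition QAxioms : list form :=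
  let x := V 0 in let y := V 1 in let z := V 2 in
  [ Fnot (Feq (Plus x One) Zero);
    Fimp (Feq (Plus x One) (Plus y One)) (Feq x y);
    Fimp (Fnot (Feq x Zero)) (Fex 1 (Feq x (Plus y One)));
    Feq (Plus x Zero) x;
    Feq (Plus x (Plus y One)) (Plus (Plus x y) One);
    Feq (Times x Zero) Zero;
    Feq (Times x (Plus y One)) (Plus (Times x y) x);
    Fimp (Fle x y) (Fex 2 (Feq (Plus z x) y));
    Fimp (Fex 2 (Feq (Plus z x) y)) (Fle x y) ].

Definition ISigma1 (p : form) : Prop :=
  In p QAxioms \/
  exists x z q, Sigma1 q /\ x <> z /\ ~ In z (fvars q) /\ p = Ind x z q.

Definition Div (a b : term) : form :=
  let k := fresh [a; b] in
  Fex k (Fand (Fle (V k) b) (Feq (Times (V k) a) b)).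

Definition Prime (p : term) : form :=
  let u := fresh [p] in let v := S u in
  Fand (Flt One p)
    (Fall u (Fimp (Fle (V u) p) (Fall v (Fimp (Fle (V v) p)
       (Fimp (Feq (Times (V u) (V v)) p) (For (Feq (V u) One) (Feq (V v) One))))))).

Definition Coprime (a b : term) : form :=
  let d := fresh [a; b] in
  Fall d (Fimp (Fle (V d) (Plus a b))
     (Fimp (Fand (Div (V d) a) (Div (V d) b)) (Feq (V d) One))).

(* r = rad(a): r | a, every prime divisor of a divides r, r squarefree;
   rad(0) = 0 by convention *)
Definition Rad (a r : term) : form :=
  let p := fresh [a; r] in let q := S p in
  For (Fand (Feq a Zero) (Feq r Zero))
   (Fands [ Fnot (Feq a Zero);
            Div r a;
            Fall p (Fimp (Fle (V p) a)
                     (Fimp (Fand (Prime (V p)) (Div (V p) a)) (Div (V p) r)));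
            Fall q (Fimp (Fle (V q) r)
                     (Fimp (Div (Times (V q) (V q)) r) (Feq (V q) One))) ]).

(* Goedel's beta function: w = c mod (1 + (i+1) d) *)
Definition Beta (c d i w : term) : form :=
  let m := Plus (Times (Plus i One) d) One in
  let q := fresh [c; d; i; w] in
  Fex q (Fands [Fle (V q) c; Feq c (Plus (Times (V q) m) w); Flt w m]).

Definition Exp (x y z : term) : form :=
  let c := fresh [x; y; z] in let d := S c in let i := S d in let w := S i in
  Fex c (Fex d (Fands [
    Beta (V c) (V d) Zero One;
    Fall i (Fimp (Flt (V i) y) (Fall w (Fimp (Fle (V w) (V c))
        (Fimp (Beta (V c) (V d) (V i) (V w))
              (Beta (V c) (V d) (Plus (V i) One) (Times (V w) x))))));
    Beta (V c) (V d) y z ])).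

(* abc with exponent 1+1/3: for pairwise coprime positive a,b with a+b=c,
   c < K0 * rad(abc)^(4/3), i.e. c^3 < K0^3 * rad(abc)^4 *)
Definition ABC (K0 : nat) : form :=
  let a := V 0 in let b := V 1 in let c := V 2 in let r := V 3 in
  Fall 0 (Fall 1 (Fall 2 (Fall 3 (Fimp
    (Fands [ Fnot (Feq a Zero); Fnot (Feq b Zero); Feq (Plus a b) c;
             Coprime a b; Coprime b c; Coprime a c; Rad (Times (Times a b) c) r ])
    (Flt (tpow c 3) (Times (tpow (num K0) 3) (tpow r 4))))))).

Definition Catalan : form :=
  let x := V 0 in let y := V 1 in let a := V 2 in let b := V 3 in
  let u := V 4 in let v := V 5 in
  Fall 0 (Fall 1 (Fall 2 (Fall 3 (Fall 4 (Fall 5 (Fimp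
    (Fands [ Flt One x; Flt One y; Flt One a; Flt One b;
             Exp x a u; Exp y b v; Feq u (Plus v One) ])
    (Fands [ Feq x (num 3); Feq a (num 2); Feq y (num 2); Feq b (num 3) ]))))))).

Definition ltB (B : LStr) (u v : dom B) : Prop := leB B u v /\ u <> v.
Definition numB (B : LStr) (n : nat) : dom B := eval B (fun _ => z0 B) (num n).
Fixpoint powB (B : LStr) (r : dom B) (n : nat) : dom B :=
  match n with 0 => o1 B | S m => mulB B (powB B r m) r end.
Fixpoint nmulB (B : LStr) (n : nat) (y : dom B) : dom B :=
  match n with 0 => z0 B | S m => addB B (nmulB B m y) y end.

Definition RadB (B : LStr) (a r : dom B) : Prop :=
  sat B (fun n => if Nat.eqb n 0 then a else r) (Rad (V 0) (V 1)).

Definition standard (B : LStr) (y : dom B) : Prop := exists n : nat, y = numB B n.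

Definition Substructure (B : LStr) (A : dom B -> Prop) : Prop :=
  A (z0 B) /\ A (o1 B) /\
  (forall u v, A u -> A v -> A (addB B u v)) /\
  (forall u v, A u -> A v -> A (mulB B u v)).

(* A satisfies Presburger arithmetic Pr (operations/order induced from B) *)
Definition PrSub (B : LStr) (A : dom B -> Prop) : Prop :=
  (forall z, A z -> z0 B <> addB B z (o1 B)) /\
  (forall u, A u -> u <> z0 B -> exists z, A z /\ u = addB B z (o1 B)) /\
  (forall u v z, A u -> A v -> A z -> addB B u z = addB B v z -> u = v) /\
  (forall u, A u -> addB B u (z0 B) = u) /\
  (forall u v z, A u -> A v -> A z ->
     addB B u (addB B v z) = addB B (addB B u v) z) /\
  (forall u v, A u -> A v -> addB B u v = addB B v u) /\
  (forall u v, A u -> A v -> (leB B u v <-> exists z, A z /\ addB B u z = v)) /\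
  (forall n : nat, 0 < n -> forall u, A u -> exists y, A y /\
     leB B (nmulB B n y) u /\ ltB B u (nmulB B n (addB B y (o1 B)))).

(* axioms (e1)-(e4) of Exp' for e : B x A -> B (e given as a function on
   B x B, only its restriction to B x A matters) *)
Definition ExpAx (B : LStr) (A : dom B -> Prop) (e : dom B -> dom B -> dom B) : Prop :=
  (forall x y, A y -> ((x = o1 B \/ y = z0 B) <-> e x y = o1 B)) /\
  (forall x y, A y -> x <> z0 B -> e x y <> z0 B) /\
  (forall x, e x (o1 B) = x) /\
  (forall x y z, A y -> A z -> e x (addB B y z) = mulB B (e x y) (e x z)).

(* Everything happens inside a model B of I Sigma_1.  There the least r >= 1
   that divides a and is divisible by every prime factor of a exists by the
   Delta_0 least number principle; it is squarefree, hence it is rad(a), and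
   it lies below every u with u | a | u^m.
   (a) For standard y = n >= 2, e(x,y) = x^n and rad(x^n) <= x, so
   rad^2 <= x^2 <= x^n.
   (b) For nonstandard y and standard n, Presburger division gives
   y = (n+1) q + j with j standard, so q is nonstandard and u := e(x,q)
   exceeds every standard K.  Since e(x,y) = u^(n+1) x^j and x | u we get
   rad <= u, whence K rad^n < u^(n+1) <= e(x,y). *)
From Stdlib Require Import List Arith Lia Classical Setoid.
Import ListNotations.

Lemma eval_ext (M : LStr) t (r1 r2 : nat -> dom M) :
  (forall n, In n (tvars t) -> r1 n = r2 n) -> eval M r1 t = eval M r2 t.
Proof.
  induction t; simpl; intros H; auto;
  rewrite IHt1, IHt2; auto; intros; apply H; apply in_or_app; auto.
Qed.

Lemma sat_ext (M : LStr) p : forall (r1 r2 : nat -> dom M),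
  (forall n, In n (fvars p) -> r1 n = r2 n) -> (sat M r1 p <-> sat M r2 p).
Proof.
  induction p; simpl; intros r1 r2 H.
  - rewrite (eval_ext M s r1 r2), (eval_ext M t r1 r2); [tauto| |];
    intros; apply H; apply in_or_app; auto.
  - rewrite (eval_ext M s r1 r2), (eval_ext M t r1 r2); [tauto| |];
    intros; apply H; apply in_or_app; auto.
  - tauto.
  - rewrite (IHp1 r1 r2), (IHp2 r1 r2); [tauto| |]; intros; apply H; apply in_or_app; auto.
  - rewrite (IHp1 r1 r2), (IHp2 r1 r2); [tauto| |]; intros; apply H; apply in_or_app; auto.
  - rewrite (IHp1 r1 r2), (IHp2 r1 r2); [tauto| |]; intros; apply H; apply in_or_app; auto.
  - split; intros H1 d; [rewrite <- (IHp (upd r1 x d)) | rewrite (IHp (upd r1 x d) (upd r2 x d))]; auto;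
    intros n Hn; unfold upd; destruct (Nat.eqb n x) eqn:E; auto; apply H;
    apply filter_In; rewrite E; auto.
  - split; intros [d H1]; exists d; [rewrite <- (IHp (upd r1 x d)) | rewrite (IHp (upd r1 x d) (upd r2 x d))]; auto;
    intros n Hn; unfold upd; destruct (Nat.eqb n x) eqn:E; auto; apply H;
    apply filter_In; rewrite E; auto.
Qed.

Lemma upd_eq (M : LStr) (r : nat -> dom M) x d : upd r x d x = d.
Proof. unfold upd; rewrite Nat.eqb_refl; auto. Qed.

Lemma upd_neq (M : LStr) (r : nat -> dom M) x d n : n <> x -> upd r x d n = r n.
Proof. unfold upd; intros H; apply Nat.eqb_neq in H; rewrite H; auto. Qed.

Lemma eval_upd_notin (M : LStr) t rho k d :
  ~ In k (tvars t) -> eval M (upd rho k d) t = eval M rho t.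
Proof. intros H; apply eval_ext; intros n Hn; apply upd_neq; intros ->; auto. Qed.

Lemma sat_upd_notin (M : LStr) (rho : nat -> dom M) q x z dz d :
  ~ In z (fvars q) -> (sat M (upd (upd rho z dz) x d) q <-> sat M (upd rho x d) q).
Proof.
  intros Hz; apply sat_ext; intros n Hn; unfold upd.
  destruct (Nat.eqb n x); auto.
  destruct (Nat.eqb n z) eqn:E; auto. apply Nat.eqb_eq in E; subst; tauto.
Qed.

Lemma fold_max_ge l a : In a l -> a <= fold_right Nat.max 0 l.
Proof. induction l; simpl; [tauto|]; intros [H|H]; [subst; lia| specialize (IHl H); lia]. Qed.

Lemma fresh_ge ts t n : In t ts -> fresh ts <= n -> ~ In n (tvars t).
Proof.
  unfold fresh; intros Ht Hn Hin.
  assert (n <= fold_right Nat.max 0 (flat_map tvars ts)) by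
    (apply fold_max_ge, in_flat_map; eauto).
  lia.
Qed.

(** * Arithmetic in a model of I Sigma_1 *)

Section ISigma1Model.
Variable B : LStr.
Hypothesis HQ : forall p, In p QAxioms -> forall rho, sat B rho p.
Hypothesis HI : forall x z q, Sigma1 q -> x <> z -> ~ In z (fvars q) ->
  forall rho, sat B rho (Ind x z q).

Lemma sigma1_induction (P : dom B -> Prop) q x z rho :
  Sigma1 q -> x <> z -> ~ In z (fvars q) ->
  (forall d, sat B (upd rho x d) q <-> P d) -> P (z0 B) ->
  (forall d, P d -> P (addB B d (o1 B))) -> forall d, P d.
Proof.
  intros Hq Hxz Hz HP H0 HS d. apply HP.
  pose proof (HI x z q Hq Hxz Hz rho) as H. simpl in H. apply H. split.
  - intros d' E. rewrite upd_eq in E. subst. apply HP; auto.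
  - intros dz IH d' E. rewrite upd_eq, upd_neq in E by auto. rewrite upd_eq in E.
    rewrite sat_upd_notin by auto. apply HP. subst. apply HS.
    apply HP. rewrite <- (sat_upd_notin B rho q x z dz dz Hz). apply IH.
    rewrite upd_eq, upd_neq by auto. rewrite upd_eq. auto.
Qed.

Definition env (l : list (dom B)) : nat -> dom B := fun n => nth n l (z0 B).

Local Notation ZB := (z0 B).
Local Notation IB := (o1 B).
Declare Scope B_scope.
Local Notation "a + b" := (addB B a b) : B_scope.
Local Notation "a * b" := (mulB B a b) : B_scope.
Local Notation "a <= b" := (leB B a b) : B_scope.
Local Notation "a < b" := (ltB B a b) : B_scope.
Local Open Scope B_scope.

Ltac Qaxiom n l := let H := fresh "HQ" in
  pose proof (HQ (nth n QAxioms Fbot) ltac:(apply nth_In; simpl; lia) (env l)) as H;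
  unfold env in H; simpl in H.

Lemma succ_neq0 a : a + IB <> ZB. Proof. Qaxiom 0 [a]; auto. Qed.
Lemma succ_inj a b : a + IB = b + IB -> a = b. Proof. Qaxiom 1 [a;b]; auto. Qed.
Lemma neq0_succ a : a <> ZB -> exists b, a = b + IB.
Proof.
  Qaxiom 2 [a]; intros H; destruct (HQ0 H) as [d Hd].
  exists d; rewrite upd_eq in Hd; exact Hd.
Qed.
Lemma add_0_r a : a + ZB = a. Proof. Qaxiom 3 [a]; auto. Qed.
Lemma add_succ_r a b : a + (b + IB) = (a + b) + IB. Proof. Qaxiom 4 [a;b]; auto. Qed.
Lemma mul_0_r a : a * ZB = ZB. Proof. Qaxiom 5 [a]; auto. Qed.
Lemma mul_succ_r a b : a * (b + IB) = a * b + a. Proof. Qaxiom 6 [a;b]; auto. Qed.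
Lemma le_def a b : a <= b <-> exists z, z + a = b.
Proof.
  Qaxiom 7 [a;b]. Qaxiom 8 [a;b]. split; intros H.
  - destruct (HQ0 H) as [d Hd]; exists d; rewrite upd_eq in Hd. exact Hd.
  - apply HQ1. destruct H as [d Hd]; exists d; rewrite upd_eq; exact Hd.
Qed.

Ltac sigma1 := unfold Flt, Fnot, Fands; repeat (match goal with
  | |- Sigma1 (Fex _ _) => apply S1_ex
  | |- Sigma1 _ => apply S1_d0
  | |- Delta0 _ => constructor
  | |- ~ In _ _ => simpl; intuition discriminate end).
(* [V 0] is the induction variable; the other variables are read from [l]. *)
Ltac induction_by q z l := match goal with |- forall d, @?G d =>
  apply (sigma1_induction G q 0 z (env l)) end;
  [ sigma1 | discriminate | simpl; intuition discriminate
  | intros ?; unfold upd, env; simpl; tauto | cbv beta | cbv beta ].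

Lemma add_0_l : forall a, ZB + a = a.
Proof.
  induction_by (Feq (Plus Zero (V 0)) (V 0)) 1 (@nil (dom B)).
  - apply add_0_r.
  - intros d H. rewrite add_succ_r, H; auto.
Qed.

Lemma add_assoc : forall c a b, a + (b + c) = (a + b) + c.
Proof.
  intros c a b; revert c.
  induction_by (Feq (Plus (V 1) (Plus (V 2) (V 0))) (Plus (Plus (V 1) (V 2)) (V 0))) 3 [ZB; a; b].
  - rewrite !add_0_r; auto.
  - intros d H. rewrite !add_succ_r, H; auto.
Qed.

Lemma add_succ_l : forall b a, (a + IB) + b = (a + b) + IB.
Proof.
  intros b a; revert b.
  induction_by (Feq (Plus (Plus (V 1) One) (V 0)) (Plus (Plus (V 1) (V 0)) One)) 2 [ZB; a].
  - rewrite !add_0_r; auto.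
  - intros d H. rewrite !add_succ_r, H; auto.
Qed.

Lemma add_comm : forall b a, a + b = b + a.
Proof.
  intros b a; revert b.
  induction_by (Feq (Plus (V 1) (V 0)) (Plus (V 0) (V 1))) 2 [ZB; a].
  - rewrite add_0_r, add_0_l; auto.
  - intros d H. rewrite add_succ_r, H, add_succ_l; auto.
Qed.

Lemma add_cancel_r : forall c a b, a + c = b + c -> a = b.
Proof.
  intros c a b; revert c.
  induction_by (Fimp (Feq (Plus (V 1) (V 0)) (Plus (V 2) (V 0))) (Feq (V 1) (V 2))) 3 [ZB; a; b].
  - rewrite !add_0_r; auto.
  - intros d H E. rewrite !add_succ_r in E. apply succ_inj in E. auto.
Qed.

Lemma mul_0_l : forall a, ZB * a = ZB.
Proof.
  induction_by (Feq (Times Zero (V 0)) Zero) 1 (@nil (dom B)).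
  - apply mul_0_r.
  - intros d H. rewrite mul_succ_r, H, add_0_r; auto.
Qed.

Lemma mul_1_l : forall a, IB * a = a.
Proof.
  induction_by (Feq (Times One (V 0)) (V 0)) 1 (@nil (dom B)).
  - apply mul_0_r.
  - intros d H. rewrite mul_succ_r, H; auto.
Qed.

Lemma add_add_swap a b c d : (a + b) + (c + d) = (a + c) + (b + d).
Proof. rewrite !add_assoc. f_equal. rewrite <- !add_assoc. f_equal. apply add_comm. Qed.

Lemma mul_add_distr_r : forall c a b, (a + b) * c = a * c + b * c.
Proof.
  intros c a b; revert c.
  induction_by (Feq (Times (Plus (V 1) (V 2)) (V 0))
                    (Plus (Times (V 1) (V 0)) (Times (V 2) (V 0)))) 3 [ZB; a; b].
  - rewrite !mul_0_r, add_0_r; auto.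
  - intros d H. rewrite !mul_succ_r, H. apply add_add_swap.
Qed.

Lemma mul_comm : forall b a, a * b = b * a.
Proof.
  intros b a; revert b.
  induction_by (Feq (Times (V 1) (V 0)) (Times (V 0) (V 1))) 2 [ZB; a].
  - rewrite mul_0_r, mul_0_l; auto.
  - intros d H. rewrite mul_succ_r, H, mul_add_distr_r, mul_1_l; auto.
Qed.

Lemma mul_assoc : forall c a b, a * (b * c) = (a * b) * c.
Proof.
  intros c a b; revert c.
  induction_by (Feq (Times (V 1) (Times (V 2) (V 0))) (Times (Times (V 1) (V 2)) (V 0))) 3 [ZB; a; b].
  - rewrite !mul_0_r; auto.
  - intros d H. rewrite !mul_succ_r, <- H.
    rewrite (mul_comm (b * d + b) a), mul_add_distr_r, (mul_comm (b * d) a), (mul_comm b a). auto.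
Qed.

Definition B_semiring : semi_ring_theory ZB IB (addB B) (mulB B) eq.
Proof.
  constructor; intros; auto using add_0_l, add_comm, add_assoc, mul_1_l, mul_0_l,
    mul_comm, mul_assoc, mul_add_distr_r.
Qed.
Add Ring B_ring : B_semiring.

Lemma le_exists a b : a <= b <-> exists z, a + z = b.
Proof. rewrite le_def; split; intros [z H]; exists z; rewrite <- H; ring. Qed.

Lemma le_add_diag a z : a <= a + z. Proof. apply le_exists; eauto. Qed.
Lemma le_refl a : a <= a. Proof. apply le_exists; exists ZB; ring. Qed.
Lemma le_0_l a : ZB <= a. Proof. apply le_exists; exists a; ring. Qed.

Lemma le_trans a b c : a <= b -> b <= c -> a <= c.
Proof. rewrite !le_exists; intros [z1 H1] [z2 H2]; exists (z1 + z2); subst; ring. Qed.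

Lemma add_cancel_l c a b : c + a = c + b -> a = b.
Proof. intros H; apply (add_cancel_r c); rewrite (add_comm c a), (add_comm c b); auto. Qed.

Lemma add_eq_0 a b : a + b = ZB -> a = ZB /\ b = ZB.
Proof.
  intros H. destruct (classic (b = ZB)) as [E|E].
  - subst; rewrite add_0_r in H; auto.
  - destruct (neq0_succ b E) as [c ->]. rewrite add_succ_r in H.
    apply succ_neq0 in H; contradiction.
Qed.

Lemma add_id_r a z : a + z = a -> z = ZB.
Proof. intros H; apply (add_cancel_l a); rewrite H; ring. Qed.

Lemma le_antisym a b : a <= b -> b <= a -> a = b.
Proof.
  rewrite !le_exists; intros [z1 H1] [z2 H2]. subst.
  assert (z1 + z2 = ZB) by
    (apply (add_id_r a); transitivity (a + z1 + z2); [ring|exact H2]).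
  apply add_eq_0 in H as [-> ->]; ring.
Qed.

Lemma le_total : forall a b, a <= b \/ b <= a.
Proof.
  intros a b; revert a.
  induction_by (For (Fle (V 0) (V 1)) (Fle (V 1) (V 0))) 2 [ZB; b].
  - left; apply le_0_l.
  - intros d [H|H].
    + apply le_exists in H as [z Hz]. destruct (classic (z = ZB)) as [E|E].
      * subst. right. rewrite add_0_r. apply le_add_diag.
      * destruct (neq0_succ z E) as [w ->]. left. apply le_exists. exists w. rewrite <- Hz; ring.
    + right. eapply le_trans; [exact H| apply le_add_diag].
Qed.

Lemma le_0_r a : a <= ZB -> a = ZB.
Proof. intros H; apply le_antisym; auto; apply le_0_l. Qed.

Lemma le_succ_r a b : a <= b + IB -> a <= b \/ a = b + IB.
Proof.
  intros H; apply le_exists in H as [z Hz]. destruct (classic (z = ZB)) as [E|E].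
  - subst; right; rewrite <- Hz; ring.
  - destruct (neq0_succ z E) as [w ->]. left; apply le_exists; exists w.
    apply succ_inj; rewrite <- Hz; ring.
Qed.

Lemma one_neq0 : IB <> ZB.
Proof. intros E; apply (succ_neq0 ZB); rewrite add_0_l; auto. Qed.

Lemma lt_le_succ a b : a < b <-> a + IB <= b.
Proof.
  split.
  - intros [H1 H2]. apply le_exists in H1 as [z Hz]. destruct (classic (z = ZB)) as [E|E].
    + subst; rewrite add_0_r in H2; tauto.
    + destruct (neq0_succ z E) as [w ->]. apply le_exists; exists w; rewrite <- Hz; ring.
  - intros H. apply le_exists in H as [z Hz]. split.
    + apply le_exists; exists (IB + z); rewrite <- Hz; ring.
    + intros E. rewrite <- E in Hz. apply (succ_neq0 z). apply (add_id_r a).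
      transitivity (a + IB + z); [ring | exact Hz].
Qed.

Lemma not_lt a b : ~ a < b -> b <= a.
Proof.
  intros H. destruct (le_total a b) as [H1|H1]; auto.
  destruct (classic (a = b)); subst; auto using le_refl. exfalso; apply H; split; auto.
Qed.

Lemma le_lt_trans a b c : a <= b -> b < c -> a < c.
Proof.
  rewrite !lt_le_succ; intros H1 H2. eapply le_trans; [|exact H2].
  apply le_exists in H1 as [z Hz]; apply le_exists; exists z; rewrite <- Hz; ring.
Qed.

Lemma lt_le_trans a b c : a < b -> b <= c -> a < c.
Proof. rewrite !lt_le_succ; intros H1 H2. eapply le_trans; eauto. Qed.

Lemma add_le_mono_r_inv a b c : a + c <= b + c -> a <= b.
Proof.
  rewrite !le_exists; intros [z Hz]; exists z; apply (add_cancel_r c); rewrite <- Hz; ring.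
Qed.

Lemma add_le_mono a b c d : a <= b -> c <= d -> a + c <= b + d.
Proof. rewrite !le_exists; intros [z1 H1] [z2 H2]; exists (z1 + z2); subst; ring. Qed.

Lemma mul_le_mono a b c d : a <= b -> c <= d -> a * c <= b * d.
Proof.
  rewrite !le_exists; intros [z1 H1] [z2 H2]; exists (z1 * c + a * z2 + z1 * z2); subst; ring.
Qed.

Lemma mul_lt_mono_r a b c : a < b -> c <> ZB -> a * c < b * c.
Proof.
  rewrite !lt_le_succ; intros H Hc. apply le_exists in H as [z Hz].
  destruct (neq0_succ c Hc) as [c' ->]. apply le_exists.
  exists (c' + z * (c' + IB)). rewrite <- Hz; ring.
Qed.

Lemma mul_eq_0 a b : a * b = ZB -> a = ZB \/ b = ZB.
Proof.
  intros H. destruct (classic (b = ZB)); auto. destruct (classic (a = ZB)); auto.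
  destruct (neq0_succ a H1) as [a' ->]. destruct (neq0_succ b H0) as [b' ->].
  exfalso; apply (succ_neq0 (a' * b' + a' + b')). rewrite <- H; ring.
Qed.

Lemma le_mul_r a c : c <> ZB -> a <= a * c.
Proof. intros Hc. destruct (neq0_succ c Hc) as [c' ->]. apply le_exists; exists (a * c'); ring. Qed.

Lemma one_le a : a <> ZB -> IB <= a.
Proof. intros H; destruct (neq0_succ a H) as [b ->]; apply le_exists; exists b; ring. Qed.

Lemma one_lt a : a <> ZB -> a <> IB -> IB < a.
Proof. intros H1 H2; split; auto using one_le. Qed.

Lemma one_lt_neq0 a : IB < a -> a <> ZB.
Proof. intros [H _] ->. apply le_0_r in H. exact (one_neq0 H). Qed.

Lemma lt_mul_diag_r u v : IB < v -> u <> ZB -> u < u * v.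
Proof. intros H Hu. pose proof (mul_lt_mono_r _ _ _ H Hu). rewrite mul_1_l, mul_comm in H0; auto. Qed.

Lemma divmod m : m <> ZB -> forall t, exists h r, t = h * m + r /\ r < m.
Proof.
  intros Hm.
  induction_by (Fex 2 (Fex 3 (Fand (Feq (V 0) (Plus (Times (V 2) (V 1)) (V 3)))
                                   (Flt (V 3) (V 1))))) 4 [ZB; m].
  - exists ZB, ZB. split; [ring|]. split; [apply le_0_l| auto].
  - intros d [h [r [E H]]]. apply lt_le_succ in H.
    destruct (classic (r + IB = m)) as [E2|E2].
    + exists (h + IB), ZB. split; [rewrite E, <- E2; ring | split; auto using le_0_l].
    + exists h, (r + IB). split; [rewrite E; ring| split; auto].
Qed.

(* The induction is on the Delta_0 formula "no d <= w satisfies phi". *)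
Lemma delta0_least (P : dom B -> Prop) phi x rho : Delta0 phi ->
  (forall d, sat B (upd rho x d) phi <-> P d) -> (exists d, P d) ->
  exists d, P d /\ forall d', d' < d -> ~ P d'.
Proof.
  intros Hphi HP [d0 Hd0]. apply NNPP; intros Hno.
  set (m := fold_right Nat.max 0 (x :: fvars phi)).
  assert (Hm : forall n, In n (x :: fvars phi) -> (n <= m)%nat) by (intros; apply fold_max_ge; auto).
  set (w := S m). set (z := S (S m)).
  assert (Hxm : (x <= m)%nat) by (apply Hm; simpl; auto).
  assert (Hxw : x <> w) by (unfold w; lia).
  assert (Hw : ~ In w (fvars phi))
    by (intros H; assert ((w <= m)%nat) by (apply Hm; simpl; auto); unfold w in *; lia).
  assert (Hz : ~ In z (fvars phi))
    by (intros H; assert ((z <= m)%nat) by (apply Hm; simpl; auto); unfold z in *; lia).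
  assert (Hbelow : forall dw d, d <= dw -> ~ P d).
  { apply (sigma1_induction (fun dw => forall d, d <= dw -> ~ P d)
      (Fall x (Fimp (Fle (V x) (V w)) (Fnot phi))) w z rho).
    - apply S1_d0. apply D0_ball. simpl; intuition. constructor; auto; constructor.
    - unfold w, z; lia.
    - intros H. cbn [fvars tvars app Fnot] in H. apply filter_In in H as [H _].
      simpl in H. destruct H as [H|[H|H]].
      + unfold z in H; lia.
      + unfold w, z in H; lia.
      + apply in_app_or in H as [H|H]; [tauto| simpl in H; tauto].
    - intros dw. simpl. split; intros H d Hd.
      + rewrite <- HP, <- (sat_upd_notin B rho phi x w dw d Hw). intros Hs. apply (H d); auto.
        rewrite upd_eq, upd_neq by auto. rewrite upd_eq. auto.
      + rewrite upd_eq, upd_neq in Hd by auto. rewrite upd_eq in Hd.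
        rewrite (sat_upd_notin B rho phi x w dw d Hw), HP. apply H; auto.
    - intros d Hd HPd. apply le_0_r in Hd; subst. apply Hno. exists ZB; split; auto.
      intros d' [H1 H2]. apply le_0_r in H1; contradiction.
    - intros dw IH d Hd HPd. apply le_succ_r in Hd as [Hd|Hd]; [apply (IH d); auto|].
      subst. apply Hno. exists (dw + IB); split; auto. intros d' Hd' HPd'.
      apply lt_le_succ, add_le_mono_r_inv in Hd'. apply (IH d'); auto. }
  apply (Hbelow d0 d0); auto using le_refl.
Qed.

(** * Divisibility, primes and radicals *)

Definition dv a b := exists k, k * a = b.
Definition prime p := IB < p /\ forall u v, u * v = p -> u = IB \/ v = IB.

Lemma dv_le d a : dv d a -> a <> ZB -> d <= a.
Proof.
  intros [k Hk] Ha. rewrite <- Hk, mul_comm. apply le_mul_r.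
  intros ->. apply Ha; rewrite <- Hk; ring.
Qed.

Lemma dv_refl a : dv a a. Proof. exists IB; ring. Qed.

Lemma dv_trans a b c : dv a b -> dv b c -> dv a c.
Proof. intros [k1 H1] [k2 H2]; exists (k2 * k1); subst; ring. Qed.

Lemma dv_mul_r a b c : dv a b -> dv a (b * c).
Proof. intros [k H]; exists (k * c); subst; ring. Qed.

Lemma dv_mul_l a b c : dv a b -> dv a (c * b).
Proof. intros H; rewrite mul_comm; apply dv_mul_r; auto. Qed.

Lemma dv_neq0 d a : dv d a -> a <> ZB -> d <> ZB.
Proof. intros [k Hk] Ha ->. apply Ha; rewrite <- Hk; ring. Qed.

Lemma dv_add_inv_r d x y : dv d (x + y) -> dv d x -> dv d y.
Proof.
  intros [b Hb] [a Ha]. destruct (classic (d = ZB)) as [E|E].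
  - rewrite E, mul_0_r in Ha, Hb. rewrite <- Ha, add_0_l in Hb. exists ZB. rewrite <- Hb; ring.
  - destruct (le_total a b) as [H|H].
    + apply le_exists in H as [g Hg]. exists g. apply (add_cancel_l x).
      rewrite <- Hb, <- Hg, <- Ha; ring.
    + destruct (classic (b = a)) as [->|N].
      * exists ZB. apply (add_cancel_l x). rewrite <- Hb, <- Ha; ring.
      * exfalso. destruct (mul_lt_mono_r b a d (conj H N) E) as [H1 H2].
        apply H2. apply le_antisym; auto. rewrite Hb, Ha. apply le_add_diag.
Qed.

Lemma Div_Delta0 a b : Delta0 (Div a b).
Proof.
  unfold Div. apply D0_bex; [apply fresh_ge with (ts := [a;b]); simpl; auto|].
  repeat constructor.
Qed.

Lemma sat_Div rho a b : sat B rho (Div a b) <-> dv (eval B rho a) (eval B rho b).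
Proof.
  unfold Div. simpl. set (k := fresh [a; b]).
  assert (Ha : ~ In k (tvars a)) by (apply fresh_ge with (ts := [a;b]); simpl; auto).
  assert (Hb : ~ In k (tvars b)) by (apply fresh_ge with (ts := [a;b]); simpl; auto).
  split.
  - intros [d [_ H]]. rewrite upd_eq, !eval_upd_notin in H by auto. exists d; auto.
  - intros [d H]. destruct (classic (eval B rho a = ZB)) as [E|E].
    + exists ZB. rewrite upd_eq, !eval_upd_notin by auto.
      rewrite <- H, E, mul_0_r. split; [apply le_0_l| ring].
    + exists d. rewrite upd_eq, !eval_upd_notin by auto.
      split; auto. rewrite <- H. apply le_mul_r; auto.
Qed.

Lemma Prime_Delta0 p : Delta0 (Prime p).
Proof.
  unfold Prime, Flt, Fnot.
  assert (~ In (fresh [p]) (tvars p)) by (apply fresh_ge with (ts := [p]); simpl; auto).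
  assert (~ In (S (fresh [p])) (tvars p)) by (apply fresh_ge with (ts := [p]); simpl; auto).
  repeat constructor; auto.
Qed.

Lemma factors_le_mul u v : u * v <> ZB -> u <= u * v /\ v <= u * v.
Proof.
  intros H. split.
  - apply le_mul_r. intros ->. apply H; ring.
  - rewrite mul_comm. apply le_mul_r. intros ->. apply H; ring.
Qed.

Lemma sat_Prime rho p : sat B rho (Prime p) <-> prime (eval B rho p).
Proof.
  unfold Prime. set (u := fresh [p]).
  assert (Hu : ~ In u (tvars p)) by (apply fresh_ge with (ts := [p]); simpl; auto).
  assert (Hv : ~ In (S u) (tvars p)) by (apply fresh_ge with (ts := [p]); unfold u; simpl; auto).
  assert (Huv : S u <> u) by lia.
  simpl. split.
  - intros [[H1 H2] H3]. split; [split; auto|].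
    intros a b E.
    assert (Hp : eval B rho p <> ZB) by (apply one_lt_neq0; split; auto).
    rewrite <- E in Hp. destruct (factors_le_mul a b Hp).
    specialize (H3 a). rewrite upd_eq, eval_upd_notin in H3 by auto.
    specialize (H3 ltac:(rewrite <- E; auto) b).
    rewrite upd_eq, !eval_upd_notin in H3 by auto. rewrite upd_neq, upd_eq in H3 by auto.
    apply H3; auto. rewrite <- E; auto.
  - intros [[H1 H2] H3]. split; [split; auto|].
    intros a Ha b Hb E. rewrite upd_neq, !upd_eq in * by auto.
    rewrite !eval_upd_notin in * by auto. apply H3; auto.
Qed.

Ltac sat_unfold := intros ?; unfold Flt, Fnot; cbn [sat eval]; rewrite ?sat_Div, ?sat_Prime;
  cbn [eval]; unfold upd, env; simpl; unfold ltB; tauto.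

(* The least divisor above 1 is prime. *)
Lemma prime_divisor_exists q : IB < q -> exists p, prime p /\ dv p q.
Proof.
  intros Hq.
  destruct (delta0_least (fun d => IB < d /\ dv d q)
              (Fand (Flt One (V 0)) (Div (V 0) (V 1))) 0 (env [ZB; q]))
    as [p [[Hp1 Hp2] Hmin]].
  - apply D0_and; [unfold Flt, Fnot; repeat constructor| apply Div_Delta0].
  - sat_unfold.
  - exists q; split; auto using dv_refl.
  - exists p; split; auto. split; auto. intros u v E.
    apply NNPP; intros N. apply not_or_and in N as [N1 N2].
    assert (Hp0 : p <> ZB) by (apply one_lt_neq0; auto).
    assert (Hu : u <> ZB) by (intros ->; apply Hp0; rewrite <- E; ring).
    assert (Hv : v <> ZB) by (intros ->; apply Hp0; rewrite <- E; ring).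
    apply (Hmin u).
    + rewrite <- E. apply lt_mul_diag_r; auto using one_lt.
    + split; auto using one_lt. apply dv_trans with p; auto. exists v; rewrite <- E; ring.
Qed.

(* The least m >= 1 with p | m v divides every t with p | t v, p among them. *)
Lemma euclid p u v : prime p -> dv p (u * v) -> dv p u \/ dv p v.
Proof.
  intros Hp Huv.
  destruct (delta0_least (fun d => IB <= d /\ dv p (d * v))
              (Fand (Fle One (V 0)) (Div (V 1) (Times (V 0) (V 2)))) 0 (env [ZB; p; v]))
    as [m [[Hm1 Hm2] Hmin]].
  - apply D0_and; [repeat constructor| apply Div_Delta0].
  - sat_unfold.
  - exists p; split; [apply (proj1 (proj1 Hp))| apply dv_mul_r, dv_refl].
  - assert (Hm0 : m <> ZB) by (intros ->; apply le_0_r in Hm1; exact (one_neq0 Hm1)).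
    assert (Hdiv : forall t, dv p (t * v) -> dv m t).
    { intros t Ht. destruct (divmod m Hm0 t) as [h [r [E Hr]]].
      destruct (classic (r = ZB)) as [->|Nr].
      - exists h; rewrite E; ring.
      - exfalso. apply (Hmin r Hr). split; auto using one_le.
        apply dv_add_inv_r with (h * (m * v)); [| apply dv_mul_l; auto].
        rewrite E in Ht. replace (h * (m * v) + r * v) with ((h * m + r) * v) by ring. auto. }
    destruct (Hdiv p (dv_mul_r _ _ _ (dv_refl p))) as [h Hh].
    destruct (proj2 Hp h m Hh) as [ -> | -> ].
    + left. rewrite mul_1_l in Hh. rewrite <- Hh. apply Hdiv; auto.
    + right. rewrite mul_1_l in Hm2; auto.
Qed.

Lemma prime_dv_pow p x n : prime p -> dv p (powB B x n) -> dv p x.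
Proof.
  intros Hp; induction n; simpl; intros H.
  - exfalso. destruct Hp as [[H1 H2] _]. apply H2, le_antisym; auto.
    apply dv_le; auto using one_neq0.
  - apply euclid in H as [H|H]; auto.
Qed.

Definition rad_candidate a r :=
  IB <= r /\ dv r a /\ (forall p, p <= a -> prime p /\ dv p a -> dv p r).

Lemma rad_candidate_least a : a <> ZB ->
  exists r, rad_candidate a r /\ forall r', r' < r -> ~ rad_candidate a r'.
Proof.
  intros Ha.
  apply (delta0_least (rad_candidate a)
    (Fands [Fle One (V 1); Div (V 1) (V 0); Fall 2 (Fimp (Fle (V 2) (V 0))
       (Fimp (Fand (Prime (V 2)) (Div (V 2) (V 0))) (Div (V 2) (V 1))))]) 1 (env [a])).
  - unfold Fands. apply D0_and; [constructor|]. apply D0_and; [apply Div_Delta0|].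
    apply D0_ball; [simpl; intuition discriminate|]. apply D0_imp; [|apply Div_Delta0].
    apply D0_and; [apply Prime_Delta0| apply Div_Delta0].
  - intros d. unfold Fands, rad_candidate. cbn [sat eval].
    setoid_rewrite sat_Div. setoid_rewrite sat_Prime.
    cbn [eval]. unfold upd, env; simpl. tauto.
  - exists a. split; [apply one_le; auto|]. split; [apply dv_refl|]. tauto.
Qed.

(* Minimality forces squarefreeness: if p^2 | r then r/p is a smaller candidate. *)
Lemma least_rad_candidate_RadB a r : a <> ZB -> rad_candidate a r ->
  (forall r', r' < r -> ~ rad_candidate a r') -> RadB B a r.
Proof.
  intros Ha Hc Hmin. unfold RadB, Rad. right. unfold Fands, Fnot. cbn [sat eval].
  setoid_rewrite sat_Div. setoid_rewrite sat_Prime. cbn [eval]. unfold upd; simpl.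
  destruct Hc as [Hr1 [Hr2 Hr3]].
  assert (Hr0 : r <> ZB) by (intros ->; apply le_0_r in Hr1; exact (one_neq0 Hr1)).
  split; auto. split; auto. split; auto.
  intros q _ Hq. apply NNPP; intros Nq.
  assert (Hq0 : q <> ZB) by (intros ->; destruct Hq as [k Hk]; apply Hr0; rewrite <- Hk; ring).
  destruct (prime_divisor_exists q (one_lt q Hq0 Nq)) as [p [Hp [t Ht]]].
  assert (Hpp : dv (p * p) r)
    by (apply dv_trans with (q * q); auto; exists (t * t); rewrite <- Ht; ring).
  destruct Hpp as [k Hk].
  set (s := k * p).
  assert (Hs : r = s * p) by (unfold s; rewrite <- Hk; ring).
  assert (Hs0 : s <> ZB) by (intros E; apply Hr0; rewrite Hs, E; ring).
  apply (Hmin s).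
  - rewrite Hs. apply lt_mul_diag_r; auto. apply Hp.
  - split; [apply one_le; auto|]. split.
    + apply dv_trans with r; auto. exists p; rewrite Hs; ring.
    + intros p' Hp'a [Hp' Hp'd]. assert (H := Hr3 p' Hp'a (conj Hp' Hp'd)).
      rewrite Hs in H. apply euclid in H as [H|H]; auto.
      destruct H as [c Hc]. destruct (proj2 Hp c p' Hc) as [ -> | E ].
      * rewrite mul_1_l in Hc. subst p'. exists k; unfold s; auto.
      * exfalso. destruct Hp' as [[_ N] _]. auto.
Qed.

Lemma RadB_exists a : a <> ZB ->
  exists r, RadB B a r /\ forall c, rad_candidate a c -> r <= c.
Proof.
  intros Ha. destruct (rad_candidate_least a Ha) as [r [Hr Hmin]]. exists r; split.
  - apply least_rad_candidate_RadB; auto.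
  - intros c Hc. apply not_lt. intros H. apply (Hmin c); auto.
Qed.

Lemma rad_candidate_dv_pow a u m : a <> ZB -> dv u a -> dv a (powB B u m) ->
  rad_candidate a u.
Proof.
  intros Ha Hua Hau. split; [apply one_le, (dv_neq0 u a); auto|]. split; auto.
  intros p _ [Hp Hpa]. apply (prime_dv_pow p u m Hp). apply dv_trans with a; auto.
Qed.

Lemma pow_neq0 x n : x <> ZB -> powB B x n <> ZB.
Proof.
  intros Hx; induction n; simpl.
  - exact one_neq0.
  - intros E; apply mul_eq_0 in E as [E|E]; auto.
Qed.

Lemma pow_le_mono a b n : a <= b -> powB B a n <= powB B b n.
Proof. intros H; induction n; simpl; [apply le_refl| apply mul_le_mono; auto]. Qed.

Lemma pow_add a m n : powB B a (m + n) = powB B a m * powB B a n.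
Proof. induction n; simpl powB; [rewrite Nat.add_0_r; ring|rewrite Nat.add_succ_r; simpl; rewrite IHn; ring]. Qed.

Lemma pow_dv_pow a b n : dv a b -> dv (powB B a n) (powB B b n).
Proof. intros [k Hk]; exists (powB B k n); induction n; simpl; [ring|rewrite <- IHn, <- Hk; ring]. Qed.

Lemma numB_succ n : numB B (S n) = numB B n + IB. Proof. reflexivity. Qed.
Lemma numB_0 : numB B 0 = ZB. Proof. reflexivity. Qed.

Lemma numB_add m n : numB B (m + n) = numB B m + numB B n.
Proof.
  induction n.
  - rewrite Nat.add_0_r, numB_0; ring.
  - rewrite Nat.add_succ_r, !numB_succ, IHn; ring.
Qed.

Lemma numB_mul m n : numB B (m * n) = numB B m * numB B n.
Proof.
  induction n.
  - rewrite Nat.mul_0_r, numB_0; ring.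
  - rewrite Nat.mul_succ_r, numB_add, numB_succ, IHn; ring.
Qed.

Lemma le_numB_standard n b : b <= numB B n -> standard B b.
Proof.
  revert b; induction n; intros b H.
  - apply le_0_r in H. exists 0; auto.
  - rewrite numB_succ in H. apply le_succ_r in H as [H|H]; [apply IHn; auto|].
    exists (S n); auto.
Qed.

Lemma numB_le_nonstandard q K : ~ standard B q -> numB B K <= q.
Proof. intros Hq. apply not_lt. intros [H _]. exact (Hq (le_numB_standard K q H)). Qed.

Lemma nmulB_numB m a : nmulB B m a = numB B m * a.
Proof.
  induction m; simpl nmulB.
  - rewrite numB_0; ring.
  - rewrite IHm, numB_succ; ring.
Qed.

Lemma numB_lt_pow x K : IB < x -> numB B K < powB B x K.
Proof.
  intros Hx. apply lt_le_succ in Hx. induction K; simpl powB.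
  - apply lt_le_succ. rewrite numB_0, add_0_l. apply le_refl.
  - apply lt_le_succ in IHK. apply lt_le_succ. rewrite numB_succ.
    apply le_trans with (powB B x K * (IB + IB)).
    + replace (powB B x K * (IB + IB)) with (powB B x K + powB B x K) by ring.
      apply add_le_mono; auto. eapply le_trans; [|exact IHK]. rewrite add_comm. apply le_add_diag.
    + apply mul_le_mono; [apply le_refl| exact Hx].
Qed.

(** * The exponential of Exp' *)

Variable A : dom B -> Prop.
Variable e : dom B -> dom B -> dom B.
Hypothesis HA : Substructure B A.
Hypothesis HPr : PrSub B A.
Hypothesis He : ExpAx B A e.

Lemma A_0 : A ZB. Proof. apply HA. Qed.
Lemma A_1 : A IB. Proof. apply HA. Qed.
Lemma A_add u v : A u -> A v -> A (u + v). Proof. apply HA. Qed.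
Lemma A_mul u v : A u -> A v -> A (u * v). Proof. apply HA. Qed.

Lemma A_numB n : A (numB B n).
Proof. induction n; [apply A_0| rewrite numB_succ; apply A_add; auto using A_1]. Qed.

Lemma A_le_sub u v : A u -> A v -> u <= v -> exists z, A z /\ u + z = v.
Proof. intros Hu Hv. apply HPr; auto. Qed.

Lemma A_div_numB_succ n y : A y ->
  exists q j, A q /\ y = numB B (S n) * q + numB B j.
Proof.
  intros Hy. set (N := numB B (S n)).
  destruct (proj2 (proj2 (proj2 (proj2 (proj2 (proj2 (proj2 HPr)))))) (S n) (Nat.lt_0_succ n) y Hy)
    as [q [Hq [H1 H2]]].
  rewrite !nmulB_numB in H1, H2. fold N in H1, H2.
  destruct (A_le_sub _ _ (A_mul _ _ (A_numB (S n)) Hq) Hy H1) as [j [_ Ej]].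
  assert (Hj : j + IB <= N).
  { apply lt_le_succ in H2. rewrite <- Ej in H2.
    apply (add_le_mono_r_inv _ _ (N * q)).
    replace (j + IB + N * q) with (N * q + j + IB) by ring.
    replace (N + N * q) with (N * (q + IB)) by ring. exact H2. }
  destruct (le_numB_standard (S n) j (le_trans _ _ _ (le_add_diag j IB) Hj)) as [j' ->].
  exists q, j'; auto.
Qed.

Lemma e_0 x : e x ZB = IB. Proof. apply (proj1 He x ZB A_0). auto. Qed.
Lemma e_1 x : e x IB = x. Proof. apply He. Qed.
Lemma e_add x y z : A y -> A z -> e x (y + z) = e x y * e x z. Proof. apply He. Qed.
Lemma e_neq0 x y : A y -> x <> ZB -> e x y <> ZB. Proof. apply He. Qed.

Lemma e_numB x n : e x (numB B n) = powB B x n.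
Proof.
  induction n; simpl powB.
  - apply e_0.
  - rewrite numB_succ, e_add, IHn, e_1; auto using A_numB, A_1.
Qed.

Lemma e_numB_mul x m q : A q -> e x (numB B m * q) = powB B (e x q) m.
Proof.
  intros Hq; induction m; simpl powB.
  - rewrite numB_0, mul_0_l. apply e_0.
  - rewrite numB_succ. replace ((numB B m + IB) * q) with (numB B m * q + q) by ring.
    rewrite e_add, IHm; auto using A_mul, A_numB.
Qed.

Lemma dv_e x q : A q -> q <> ZB -> dv x (e x q).
Proof.
  intros Hq Hq0. destruct (A_le_sub IB q A_1 Hq (one_le q Hq0)) as [s [Hs <-]].
  rewrite e_add, e_1 by auto using A_1. exists (e x s); ring.
Qed.

Lemma numB_lt_e_nonstandard x q K : IB < x -> A q -> ~ standard B q -> numB B K < e x q.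
Proof.
  intros Hx Hq Hns.
  destruct (A_le_sub _ _ (A_numB K) Hq (numB_le_nonstandard q K Hns)) as [s [Hs <-]].
  eapply lt_le_trans; [apply (numB_lt_pow x K Hx)|].
  rewrite e_add, e_numB by auto using A_numB.
  apply le_mul_r, e_neq0; auto using one_lt_neq0.
Qed.

Lemma rad_sq_le_pow x n : IB < x -> (2 <= n)%nat ->
  exists r, RadB B (powB B x n) r /\ r * r <= powB B x n.
Proof.
  intros Hx Hn. assert (Hx0 := one_lt_neq0 x Hx).
  destruct (RadB_exists (powB B x n) (pow_neq0 x n Hx0)) as [r [Hr Hle]].
  exists r; split; auto.
  destruct n as [|[|n]]; [lia|lia|].
  assert (Hrx : r <= x).
  { apply Hle, (rad_candidate_dv_pow _ _ (S (S n))); auto using pow_neq0, dv_refl.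
    exists (powB B x n * x). simpl; ring. }
  simpl powB. replace (powB B x n * x * x) with (x * x * powB B x n) by ring.
  apply le_trans with (x * x); [apply mul_le_mono; auto| apply le_mul_r, pow_neq0; auto].
Qed.

Lemma rad_e_nonstandard x y : IB < x -> A y -> ~ standard B y ->
  exists r, RadB B (e x y) r /\ forall K n : nat, numB B K * powB B r n < e x y.
Proof.
  intros Hx Hy Hns. assert (Hx0 := one_lt_neq0 x Hx).
  destruct (RadB_exists (e x y) (e_neq0 x y Hy Hx0)) as [r [Hr Hle]].
  exists r; split; auto. intros K n.
  destruct (A_div_numB_succ n y Hy) as [q [j [Hq ->]]].
  assert (Hqns : ~ standard B q).
  { intros [m ->]. apply Hns. exists (S n * m + j)%nat. rewrite numB_add, numB_mul; auto. }
  assert (Hq0 : q <> ZB) by (intros ->; apply Hqns; exists 0%nat; auto).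
  set (u := e x q).
  assert (Hu0 : u <> ZB) by (apply e_neq0; auto).
  assert (Ea : e x (numB B (S n) * q + numB B j) = powB B u (S n) * powB B x j)
    by (rewrite e_add, e_numB_mul, e_numB; auto using A_mul, A_numB).
  assert (Hru : r <= u).
  { apply Hle, (rad_candidate_dv_pow _ _ (S n + j)).
    - apply e_neq0; auto using A_add, A_mul, A_numB.
    - rewrite Ea. simpl powB. exists (powB B u n * powB B x j); ring.
    - rewrite Ea, pow_add. destruct (pow_dv_pow x u j (dv_e x q Hq Hq0)) as [k Hk].
      exists k. rewrite <- Hk; ring. }
  apply le_lt_trans with (numB B K * powB B u n).
  - apply mul_le_mono; [apply le_refl| apply pow_le_mono; auto].
  - apply lt_le_trans with (u * powB B u n).
    + apply mul_lt_mono_r; [apply numB_lt_e_nonstandard; auto| apply pow_neq0; auto].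
    + rewrite Ea. simpl powB. rewrite (mul_comm u). apply le_mul_r, pow_neq0; auto.
Qed.

Lemma rad_e_bounds x y : A y -> IB < x -> IB < y ->
  (standard B y -> exists r, RadB B (e x y) r /\ r * r <= e x y) /\
  (~ standard B y -> exists r, RadB B (e x y) r /\
     forall K n : nat, numB B K * powB B r n < e x y).
Proof.
  intros Hy Hx [Hy1 Hy1']. split.
  - intros [n ->]. rewrite e_numB. apply rad_sq_le_pow; auto.
    destruct n as [|[|n]]; [| |lia]; exfalso.
    + rewrite numB_0 in Hy1. exact (one_neq0 (le_0_r _ Hy1)).
    + apply Hy1'. rewrite numB_succ, numB_0, add_0_l; auto.
  - apply rad_e_nonstandard; auto.
Qed.

End ISigma1Model.

Theorem lemma5p3 (S : form -> Prop) (K0 : nat)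
  (HS : forall p, ISigma1 p -> Proves S p)
  (Habc : Proves S (ABC K0))
  (Hcat : Proves S Catalan)
  (B : LStr) (HB : ModelOf B S)
  (A : dom B -> Prop) (e : dom B -> dom B -> dom B)
  (HA : Substructure B A) (HPr : PrSub B A) (He : ExpAx B A e)
  (x y : dom B) (Hy : A y)
  (Hx1 : ltB B (o1 B) x) (Hy1 : ltB B (o1 B) y) :
  (standard B y ->
     exists r, RadB B (e x y) r /\ leB B (mulB B r r) (e x y)) /\
  (~ standard B y ->
     exists r, RadB B (e x y) r /\
       forall K n : nat, ltB B (mulB B (numB B K) (powB B r n)) (e x y)).
Proof.
  assert (HQ : forall p, In p QAxioms -> forall rho, sat B rho p)
    by (intros p H rho; apply (HS p (or_introl H) B HB)).
  assert (HI : forall x z q, Sigma1 q -> x <> z -> ~ In z (fvars q) ->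
                 forall rho, sat B rho (Ind x z q))
    by (intros x' z q H1 H2 H3 rho; apply (HS _ (or_intror (ex_intro _ x' (ex_intro _ z
          (ex_intro _ q (conj H1 (conj H2 (conj H3 eq_refl))))))) B HB)).
  exact (rad_e_bounds B HQ HI A e HA HPr He x y Hy Hx1 Hy1).
Qed.
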